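(* Fix $C<1$ and let $C_u=C+\alpha_n$. There is an integer $N\ge1$ such that $C_u<1$ for all $n\ge N$, and for all $n\ge N$, all $1\le i\le n$ and all $1\le t\le n$, \[ \mathbb{E}(\#\mathcal{N}_t(i))\le C_u^t\qquad\text{and}\qquad\mathbb{E}\big((\#\mathcal{N}_t(i))^2\big)\le\frac{C_u^t}{1-C_u}. \]
   Context: Let $C>0$ be a constant and $(\alpha_n)_{n\ge1}$ a sequence of nonnegative reals with $\alpha_n\to0$. For each $n$, consider the complete graph $K_n$ on vertex set $\{1,\dots,n\}$; each edge $e$ of $K_n$ is independently open with probability $p_n(e)$ and closed otherwise, where $\frac{C-\alpha_n}{n}\le p_n(e)\le\frac{C+\alpha_n}{n}$ for every edge $e$. Let $G$ be the resulting random graph of open edges, with probability measure $\mathbb{P}$ and expectation $\mathbb{E}$. For a vertex $i$ and integer $t\ge1$, $\mathcal{N}_t(i)$ is the set of vertices at graph distance exactly $t$ from $i$ in $G$ (distance = least number of open edges in a path joining them), and $\#\mathcal{N}_t(i)$ its cardinality. *)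

From HB Require Import structures.
From mathcomp Require Import all_boot all_order all_algebra.
From mathcomp Require Import all_classical all_reals all_analysis.
Set Implicit Arguments. Unset Strict Implicit. Unset Printing Implicit Defensive.
Import Order.TTheory GRing.Theory Num.Theory.
Local Open Scope ring_scope.

(* Edges of the complete graph K_n on vertex set 'I_n (vertices 1..n of the
   paper are 0..n-1 here): unordered pairs {i,j}, i<>j, encoded as (i,j), i<j. *)
Definition edge (n : nat) : finType := {e : 'I_n * 'I_n | (e.1 < e.2)%N}.

Definition config (n : nat) : finType := {ffun edge n -> bool}.

Section RG.
Variable R : realType.
Variable n : nat.

Definition cfg_prob (p : edge n -> R) (w : config n) : R :=
  \prod_(e : edge n) (if w e then p e else 1 - p e).

Definition Expect (p : edge n -> R) (X : config n -> R) : R :=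
  \sum_(w : config n) cfg_prob p w * X w.

Definition adj (w : config n) : rel 'I_n := fun i j =>
  [exists e : edge n, w e && ((val e == (i, j)) || (val e == (j, i)))].

Definition walk (w : config n) (k : nat) (i j : 'I_n) : bool :=
  [exists s : k.-tuple 'I_n, path (adj w) i s && (last i s == j)].

(* N_t(i): vertices at graph distance exactly t from i
   (a walk of length t exists, and none of length < t). *)
Definition Nt (w : config n) (t : nat) (i : 'I_n) : {set 'I_n} :=
  [set j | walk w t i j & [forall k : 'I_t, ~~ walk w k i j]].
End RG.

From HB Require Import structures.
From mathcomp Require Import all_boot all_order all_algebra.
From mathcomp Require Import all_classical all_reals all_analysis.
From mathcomp Require Import zify.
Import Order.TTheory GRing.Theory Num.Theory numFieldNormedType.Exports.
Local Open Scope classical_set_scope.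
Local Open Scope ring_scope.
Set Implicit Arguments. Unset Strict Implicit. Unset Printing Implicit Defensive.

(* First moment: every j in N_t(i) is the endpoint of an open self-avoiding
   walk of length t from i.  Such a walk uses t distinct edges, so it is open
   with probability at most (C_u/n)^t, and there are at most n^t of them.
   Second moment: a pair (j, k) in N_t(i) x N_t(i) is witnessed by a geodesic
   P from i to j together with a walk of length t - m from the m-th vertex of
   P to k that leaves P for good; geodesy forces the branching vertex to sit at
   the same depth m on both geodesics.  These 2t - m edges are distinct, so the
   pairs branching at depth m contribute at most n^(2t-m) (C_u/n)^(2t-m), and
   summing the geometric series over m gives C_u^t / (1 - C_u). *)

Section Expectation.
Variables (R : realType) (n : nat) (p : edge n -> R).
Hypothesis p01 : forall e, 0 <= p e <= 1.

Lemma cfg_prob_ge0 w : 0 <= cfg_prob p w.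
Proof.
apply: prodr_ge0 => e _; have /andP[p0 p1] := p01 e.
by case: (w e); rewrite ?subr_ge0.
Qed.

Lemma ler_Expect (X Y : config n -> R) :
  (forall w, X w <= Y w) -> Expect p X <= Expect p Y.
Proof. by move=> XY; apply: ler_sum => w _; rewrite ler_wpM2l ?cfg_prob_ge0. Qed.

Lemma Expect_sum (I : Type) (r : seq I) (P : pred I) (F : I -> config n -> R) :
  Expect p (fun w => \sum_(i <- r | P i) F i w) = \sum_(i <- r | P i) Expect p (F i).
Proof. by rewrite /Expect exchange_big; apply: eq_bigr => w _; rewrite mulr_sumr. Qed.

Lemma Expect_all_open (S : {set edge n}) :
  Expect p (fun w => [forall e in S, w e]%:R) = \prod_(e in S) p e.
Proof.
rewrite /Expect /cfg_prob.
transitivity (\sum_(w : config n) \prod_(e : edge n)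
   ((if w e then p e else 1 - p e) * (if e \in S then (w e)%:R else 1))).
  apply: eq_bigr => w _; rewrite big_split /= -big_mkcond /=; congr (_ * _).
  case: forall_inP => [Sw | /forall_inP]; first by rewrite big1 // => e /Sw ->.
  by rewrite negb_forall_in => /exists_inP[e eS /negbTE we]; rewrite (bigD1 e) //= we mul0r.
rewrite /config -(bigA_distr_bigA (fun e (b : bool) =>
  (if b then p e else 1 - p e) * (if e \in S then b%:R else 1))) [RHS]big_mkcond.
apply: eq_bigr => e _; rewrite big_bool /=.
by case: (e \in S); rewrite ?mulr1 ?mulr0 ?addr0 // addrC subrK.
Qed.

End Expectation.

Section EdgeSets.
Variable n : nat.
Implicit Types (ab : 'I_n * 'I_n) (ps : seq ('I_n * 'I_n)) (e : edge n) (w : config n).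

Definition sort_pair ab : 'I_n * 'I_n := if (ab.1 < ab.2)%N then ab else (ab.2, ab.1).

Definition joins e ab := (val e == ab) || (val e == (ab.2, ab.1)).

Definition edge_set ps : {set edge n} := [set e | has (joins e) ps].

Definition simple_edges ps :=
  all (fun ab => ab.1 != ab.2) ps && uniq (map sort_pair ps).

Definition all_adj w ps := all (fun ab => adj w ab.1 ab.2) ps.

Lemma all_adj_edge_set w ps : all_adj w ps -> [forall e in edge_set ps, w e].
Proof.
move=> adj_ps; apply/forall_inP => e; rewrite inE => /hasP[ab /(allP adj_ps)].
case/existsP=> e' /andP[we' je'] je; suff -> : e = e' by [].
apply: val_inj; move: je je' (valP e) (valP e'); rewrite /joins.
case: ab (val e) (val e') => a b [x1 x2] [y1 y2] /=.
by case/orP=> /eqP[-> ->]; case/orP=> /eqP[-> ->] //= lt1 lt2;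
  have := ltn_trans lt1 lt2; rewrite ltnn.
Qed.

Lemma sort_pair_lt ab : ab.1 != ab.2 -> ((sort_pair ab).1 < (sort_pair ab).2)%N.
Proof.
rewrite /sort_pair; case: ab => a b /= neq_ab.
by case: (ltngtP a b) neq_ab => //= eq_ab; rewrite (val_inj eq_ab) eqxx.
Qed.

Lemma joinsE e ab : ab.1 != ab.2 -> joins e ab = (val e == sort_pair ab).
Proof.
rewrite /joins /sort_pair; case: ab => a b /= neq_ab.
case: e => [[x1 x2] /= lt_x].
have flip (y1 y2 : 'I_n) : (y2 <= y1)%N -> ((x1, x2) == (y1, y2)) = false.
  by move=> le_y; apply/negbTE/eqP => -[e1 e2]; move: lt_x; rewrite e1 e2 ltnNge le_y.
case: (ltngtP a b) neq_ab => [lt_ab|lt_ba|eq_ab] neq; last by rewrite (val_inj eq_ab) eqxx in neq.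
- by rewrite (flip b a) ?orbF // ltnW.
- by rewrite (flip a b) // ltnW.
Qed.

Lemma sort_pairP ab cd : sort_pair ab = sort_pair cd -> ab = cd \/ ab = (cd.2, cd.1).
Proof.
case: ab cd => a b [c d]; rewrite /sort_pair /=.
by case: ifP => _; case: ifP => _ [-> ->]; [left|right|right|left].
Qed.

Lemma all_adj_cat w ps1 ps2 : all_adj w (ps1 ++ ps2) = all_adj w ps1 && all_adj w ps2.
Proof. exact: all_cat. Qed.

Lemma size_le_card_edge_set ps : simple_edges ps -> (size ps <= #|edge_set ps|)%N.
Proof.
case/andP=> /allP loopless /card_uniqP uniq_ps.
rewrite -(size_map sort_pair) -uniq_ps -(card_imset _ val_inj).
apply: subset_leq_card; apply/fintype.subsetP => _ /mapP[ab ab_ps ->].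
have neq_ab := loopless ab ab_ps.
apply/imsetP; exists (Sub (sort_pair ab) (sort_pair_lt neq_ab) : edge n) => //.
by rewrite inE; apply/hasP; exists ab; rewrite // joinsE // SubK.
Qed.

Lemma simple_edges_cat ps1 ps2 (X : seq 'I_n) :
  simple_edges ps1 -> simple_edges ps2 ->
  (forall ab, ab \in ps1 -> (ab.1 \in X) && (ab.2 \in X)) ->
  (forall cd, cd \in ps2 -> cd.2 \notin X) -> simple_edges (ps1 ++ ps2).
Proof.
case/andP=> loop1 uniq1 /andP[loop2 uniq2] in1 out2.
rewrite /simple_edges all_cat loop1 loop2 map_cat cat_uniq uniq1 uniq2 /= andbT.
apply/hasPn => _ /mapP[[c d] cd_ps2 ->]; apply/negP => /mapP[[a b] ab_ps1 /sort_pairP eq_cd].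
have /andP[aX bX] := in1 _ ab_ps1.
by move/negP: (out2 _ cd_ps2); apply; case: eq_cd => -[_ ->].
Qed.

Lemma Expect_simple_all_adj_le (R : realType) (p : edge n -> R) (q : R) ps :
  (forall e, 0 <= p e <= q) -> 0 <= q -> q <= 1 ->
  Expect p (fun w => (simple_edges ps && all_adj w ps)%:R) <= q ^+ size ps.
Proof.
move=> pq q0 q1.
have p01 e : 0 <= p e <= 1 by case/andP: (pq e) => -> /le_trans->.
have [simple_ps|_] := boolP (simple_edges ps); last first.
  by rewrite /Expect big1 ?exprn_ge0 // => w _; rewrite mulr0.
apply: (@le_trans _ _ (Expect p (fun w => [forall e in edge_set ps, w e]%:R))).
  apply: ler_Expect => // w /=.
  by have [/all_adj_edge_set-> | _] := boolP (all_adj w ps); rewrite ?ler0n.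
rewrite Expect_all_open //; apply: (@le_trans _ _ (\prod_(e in edge_set ps) q)).
  by apply: ler_prod => e _; apply: pq.
by rewrite prodr_const ler_wiXn2l // (size_le_card_edge_set simple_ps).
Qed.

End EdgeSets.

Section PathSurgery.
Variable T : Type.
Implicit Types (x : T) (s : seq T).

Lemma last_take x s m : (m <= size s)%N -> last x (take m s) = nth x (x :: s) m.
Proof.
by elim: s x m => [|y s IHs] x [|m] //= le_ms; rewrite IHs // (set_nth_default x).
Qed.

Lemma last_drop x s m : (m <= size s)%N -> last (nth x (x :: s) m) (drop m s) = last x s.
Proof. by move=> le_ms; rewrite -{3}(cat_take_drop m s) last_cat last_take. Qed.

Lemma drop_path (e : rel T) x s m : (m <= size s)%N -> path e x s ->
  path e (nth x (x :: s) m) (drop m s).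
Proof.
by move=> le_ms; rewrite -{1}(cat_take_drop m s) cat_path last_take // => /andP[].
Qed.

Lemma path_splice (e : rel T) x s1 s2 m1 m2 : path e x s1 -> path e x s2 ->
  (m1 <= size s1)%N -> (m2 <= size s2)%N -> nth x (x :: s1) m1 = nth x (x :: s2) m2 ->
  [/\ path e x (take m1 s1 ++ drop m2 s2), last x (take m1 s1 ++ drop m2 s2) = last x s2
    & size (take m1 s1 ++ drop m2 s2) = (m1 + (size s2 - m2))%N].
Proof.
move=> path1 path2 le1 le2 meet.
rewrite cat_path last_cat last_take // meet take_path // drop_path // last_drop //.
by rewrite size_cat size_takel // size_drop.
Qed.

End PathSurgery.

Section Walks.
Variable n : nat.
Implicit Types (x i j : 'I_n) (s : seq 'I_n) (w : config n).

Definition walk_edges x s : seq ('I_n * 'I_n) := zip (x :: s) s.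

Lemma path_adjE w x s : path (adj w) x s = all_adj w (walk_edges x s).
Proof. by elim: s x => [|y s IHs] x //=; rewrite IHs. Qed.

Lemma size_walk_edges x s : size (walk_edges x s) = size s.
Proof. by rewrite /walk_edges size_zip /=; apply/minn_idPr. Qed.

Lemma mem_walk_edges x s ab : ab \in walk_edges x s -> (ab.1 \in x :: s) && (ab.2 \in s).
Proof.
elim: s x => [|y s IHs] x //=; rewrite inE => /orP[/eqP-> | /IHs /andP[in1 in2]].
  by rewrite !mem_head.
by rewrite in_cons in1 orbT in_cons in2 orbT.
Qed.

Lemma simple_walk_edges x s : uniq (x :: s) -> simple_edges (walk_edges x s).
Proof.
elim: s x => [|y s IHs] x //= /andP[x_ys uniq_ys].
have /andP[loop_s uniq_s] := IHs y uniq_ys.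
rewrite /simple_edges /= -/(walk_edges y s) loop_s uniq_s !andbT.
apply/andP; split; first by apply: contraNneq x_ys => ->; rewrite mem_head.
apply/negP => /mapP[[c d] /mem_walk_edges /andP[c_ys d_s] /sort_pairP].
by case=> -[ex _]; move: x_ys; rewrite ex ?c_ys // inE d_s orbT.
Qed.

Lemma walkP w l i j :
  reflect (exists s, [/\ size s = l, path (adj w) i s & last i s = j]) (walk w l i j).
Proof.
apply: (iffP existsP) => [[s /andP[path_s /eqP last_s]] | [s [size_s path_s last_s]]].
  by exists (val s); rewrite size_tuple.
have size_s' : size s == l by apply/eqP.
by exists (Tuple size_s'); rewrite /= path_s last_s eqxx.
Qed.

Lemma NtP w t i j :
  reflect (walk w t i j /\ forall l, (l < t)%N -> ~~ walk w l i j) (j \in Nt w t i).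
Proof.
rewrite inE; apply: (iffP andP) => [[walk_t /forallP short] | [walk_t short]].
  by split=> // l lt_lt; apply: (short (Ordinal lt_lt)).
by split=> //; apply/forallP => l; apply: short.
Qed.

Lemma Nt_size_le w t i j s : j \in Nt w t i -> path (adj w) i s -> last i s = j ->
  (t <= size s)%N.
Proof.
case/NtP=> _ short path_s last_s; rewrite leqNgt; apply/negP => lt_st.
by move/negP: (short _ lt_st); apply; apply/walkP; exists s.
Qed.

Lemma Nt_geodesic w t i j : j \in Nt w t i ->
  exists s, [/\ size s = t, path (adj w) i s, last i s = j & uniq (i :: s)].
Proof.
move=> jN; have /NtP[/walkP[s [size_s path_s last_s]] _] := jN.
move: last_s; case: (shortenP path_s) => s' path_s' uniq_s' sub_s last_s'.
exists s'; split=> //; apply/eqP; rewrite eqn_leq (Nt_size_le jN path_s' last_s') andbT.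
rewrite -size_s; apply: uniq_leq_size sub_s; by case/andP: uniq_s'.
Qed.

End Walks.

Section Branching.
Variable n : nat.
Implicit Types (i j k : 'I_n) (P Q : seq 'I_n) (w : config n).

Lemma Nt_depth_le w t i k P Q a b : k \in Nt w t i ->
  path (adj w) i P -> path (adj w) i Q -> size Q = t -> last i Q = k ->
  (a <= size P)%N -> (b <= t)%N -> nth i (i :: P) a = nth i (i :: Q) b -> (b <= a)%N.
Proof.
move=> kN path_P path_Q size_Q last_Q le_a le_b meet.
have le_b' : (b <= size Q)%N by rewrite size_Q.
have [path_PQ last_PQ size_PQ] := path_splice path_P path_Q le_a le_b' meet.
by have := Nt_size_le kN path_PQ (etrans last_PQ last_Q); rewrite size_PQ size_Q; lia.
Qed.

Lemma Nt_pair_witness w t i j k : j \in Nt w t i -> k \in Nt w t i ->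
  exists (m : 'I_t.+1) P Q,
  [/\ size P = t, size Q = (t - m)%N, last i P = j, last (nth i (i :: P) m) Q = k &
     simple_edges (walk_edges i P ++ walk_edges (nth i (i :: P) m) Q)
     && all_adj w (walk_edges i P ++ walk_edges (nth i (i :: P) m) Q)].
Proof.
move=> jN kN.
have [P [size_P path_P last_P uniq_P]] := Nt_geodesic jN.
have [Q [size_Q path_Q last_Q uniq_Q]] := Nt_geodesic kN.
pose onP (b : 'I_t.+1) := nth i (i :: Q) b \in i :: P.
have onP0 : onP ord0 by rewrite /onP mem_head.
(* [m] is the last depth at which [Q] visits [P]; after it, [Q] leaves [P] for good. *)
case: (arg_maxnP (fun b : 'I_t.+1 => nat_of_ord b) onP0) => m onP_m m_max.
have le_mt : (m <= t)%N by rewrite -ltnS.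
have le_mQ : (m <= size Q)%N by rewrite size_Q.
set a := index (nth i (i :: Q) m) (i :: P).
have le_aP : (a <= size P)%N by rewrite -ltnS -/(size (i :: P)) index_mem.
have le_at : (a <= t)%N by rewrite -size_P.
have meet : nth i (i :: P) a = nth i (i :: Q) m by rewrite nth_index.
have eq_am : a = m.
  apply/eqP; rewrite eqn_leq (Nt_depth_le kN path_P path_Q size_Q last_Q le_aP le_mt meet).
  by rewrite (Nt_depth_le jN path_Q path_P size_P last_P le_mQ le_at (esym meet)).
have meet_m : nth i (i :: P) m = nth i (i :: Q) m by rewrite -[in LHS]eq_am.
exists m, P, (drop m Q); rewrite meet_m; split=> //; first by rewrite size_drop size_Q.
  by rewrite last_drop.
rewrite all_adj_cat -!path_adjE path_P drop_path // !andbT.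
apply: (simple_edges_cat (X := i :: P)); first exact: simple_walk_edges.
- apply: simple_walk_edges.
  have -> : nth i (i :: Q) m :: drop m Q = drop m (i :: Q).
    by rewrite [RHS](drop_nth i) //= ltnS.
  exact: drop_uniq.
- by move=> ab /mem_walk_edges /andP[-> in2]; rewrite inE in2 orbT.
move=> cd /mem_walk_edges /andP[_ /(nthP i)[l lt_l <-]].
rewrite size_drop size_Q in lt_l; rewrite nth_drop.
have lt_ml : ((m + l).+1 < t.+1)%N by lia.
by apply/negP => onP_ml; have := m_max (Ordinal lt_ml) onP_ml; rewrite /=; lia.
Qed.

End Branching.

Lemma card_le_sum_witnesses (J : finType) (A : {set J}) (M : nat) (I : 'I_M -> finType)
  (good : forall m, I m -> bool) (f : forall m, I m -> J) :
  (forall j, j \in A -> exists m (x : I m), good m x && (f m x == j)) ->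
  (#|A| <= \sum_(m < M) \sum_(x : I m) good m x)%N.
Proof.
move=> witness.
apply: (@leq_trans (\sum_(j in A) \sum_(m < M) \sum_(x : I m) (good m x && (f m x == j)))).
  rewrite -sum1_card; apply: leq_sum => j /witness[m [x /andP[good_x fx]]].
  by rewrite (bigD1 m) //= (bigD1 x) //= good_x fx /= -addnA leq_addr.
rewrite exchange_big /=; apply: leq_sum => m _.
rewrite exchange_big /=; apply: leq_sum => x _.
case: (good m x) => /=; last by rewrite big1.
apply: (@leq_trans (\sum_j (f m x == j))); first by rewrite [leqRHS](bigID (mem A)) leq_addr.
by rewrite (bigD1 (f m x)) //= eqxx big1 // => j /negbTE; rewrite eq_sym => ->.
Qed.

Lemma geometric_sum_le (R : realFieldType) (c : R) k :
  0 <= c -> c < 1 -> \sum_(m < k) c ^+ m <= (1 - c)^-1.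
Proof.
move=> c_ge0 c_lt1; have subc_gt0 : 0 < 1 - c by rewrite subr_gt0.
rewrite -(ler_pM2l subc_gt0) mulfV ?gt_eqF // -opprB mulNr -subrX1 opprB.
by rewrite lerBlDr lerDl exprn_ge0.
Qed.

Section Moments.
Variables (R : realType) (n : nat) (p : edge n -> R) (c : R).
Hypotheses (p_le : forall e, 0 <= p e <= c / n%:R) (c_ge0 : 0 <= c) (c_lt1 : c < 1).

Let q_le1 : c / n%:R <= 1.
Proof.
have [->|n_gt0] := posnP n; first by rewrite invr0 mulr0.
by rewrite ler_pdivrMr ?ltr0n // mul1r (le_trans (ltW c_lt1)) // ler1n.
Qed.

Lemma Expect_card_le (J : finType) (A : config n -> {set J}) (M : nat) (I : 'I_M -> finType)
    (ps : forall m, I m -> seq ('I_n * 'I_n)) (f : forall m, I m -> J) :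
  (forall w j, j \in A w -> exists m (x : I m),
     simple_edges (ps m x) && all_adj w (ps m x) && (f m x == j)) ->
  Expect p (fun w => #|A w|%:R) <= \sum_(m < M) \sum_(x : I m) (c / n%:R) ^+ size (ps m x).
Proof.
move=> witness.
have p01 e : 0 <= p e <= 1 by case/andP: (p_le e) => -> /le_trans->.
apply: (@le_trans _ _ (Expect p (fun w => (\sum_(m < M) \sum_(x : I m)
    (simple_edges (ps m x) && all_adj w (ps m x)) : nat)%:R))).
  by apply: ler_Expect => // w; rewrite ler_nat; apply: card_le_sum_witnesses; apply: witness.
under eq_fun => w do rewrite natr_sum; rewrite Expect_sum; apply: ler_sum => m _.
under eq_fun => w do rewrite natr_sum; rewrite Expect_sum; apply: ler_sum => x _.
by apply: Expect_simple_all_adj_le => //; rewrite divr_ge0.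
Qed.

Let tuple_weight k : (0 < n)%N -> (c / n%:R) ^+ k *+ n ^ k = c ^+ k.
Proof. by move=> n_gt0; rewrite -[LHS]mulr_natl natrX -exprMn mulrC divfK // pnatr_eq0 -lt0n. Qed.

Lemma Expect_card_Nt_le i t : Expect p (fun w => #|Nt w t i|%:R) <= c ^+ t.
Proof.
have n_gt0 : (0 < n)%N := leq_ltn_trans (leq0n i) (ltn_ord i).
apply: (le_trans (@Expect_card_le _ _ 1 (fun=> (t.-tuple 'I_n : finType))
   (fun _ P => walk_edges i P) (fun _ P => last i P) _)).
  move=> w j /Nt_geodesic[P [size_P path_P last_P uniq_P]].
  have size_P' : size P == t by apply/eqP.
  exists ord0, (Tuple size_P'); rewrite /= simple_walk_edges // -path_adjE path_P.
  by rewrite last_P eqxx.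
rewrite big_ord1; under eq_bigr => P _ do rewrite size_walk_edges size_tuple.
by rewrite sumr_const card_tuple card_ord tuple_weight.
Qed.

Lemma Expect_card_Nt_sqr_le i t : Expect p (fun w => #|Nt w t i|%:R ^+ 2) <= c ^+ t / (1 - c).
Proof.
have n_gt0 : (0 < n)%N := leq_ltn_trans (leq0n i) (ltn_ord i).
pose I (m : 'I_t.+1) : finType := (t.-tuple 'I_n * (t - m).-tuple 'I_n)%type.
pose ps m (x : I m) := walk_edges i x.1 ++ walk_edges (nth i (i :: x.1) m) x.2.
under eq_fun => w do rewrite -natrX -mulnn -cardsX.
apply: (le_trans (@Expect_card_le _ _ t.+1 I ps
   (fun m x => (last i x.1, last (nth i (i :: x.1) m) x.2)) _)).
  move=> w [j k]; rewrite finset.in_setX => /andP[jN kN].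
  have [m [P [Q [size_P size_Q last_P last_Q good]]]] := Nt_pair_witness jN kN.
  have size_P' : size P == t by apply/eqP.
  have size_Q' : size Q == (t - m)%N by apply/eqP.
  by exists m, (Tuple size_P', Tuple size_Q'); rewrite /ps /= good last_P last_Q eqxx.
rewrite (eq_bigr (fun m : 'I_t.+1 => c ^+ t * c ^+ (t - m))); last first.
  move=> m _; under eq_bigr => x _ do rewrite /ps size_cat !size_walk_edges !size_tuple.
  by rewrite sumr_const card_prod !card_tuple card_ord -expnD tuple_weight // exprD.
rewrite -mulr_sumr ler_wpM2l ?exprn_ge0 // (reindex_inj rev_ord_inj) /=.
under eq_bigr => m _ do rewrite subSS (subKn (leq_ord m)).
exact: geometric_sum_le c_ge0 c_lt1.
Qed.

End Moments.

Lemma eventually_addr_lt1 (R : realType) (C : R) (alpha : nat -> R) :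
  C < 1 -> alpha @ \oo --> 0 -> exists N, (1 <= N)%N /\ forall n, (N <= n)%N -> C + alpha n < 1.
Proof.
move=> C_lt1 alpha0.
have [N _ small] : \forall n \near \oo, alpha n < 1 - C.
  by apply: (cvgr_lt _ alpha0); rewrite subr_gt0.
by exists N.+1; split=> // n le_Nn; rewrite -ltrBrDl; apply: small; apply: ltnW.
Qed.

Theorem lemma6 (R : realType) (C : R) (alpha : nat -> R)
  (p : forall n : nat, edge n -> R)
  (hC0 : 0 < C) (hC1 : C < 1)
  (halpha0 : forall n, 0 <= alpha n)
  (halpha : alpha @ \oo --> 0)
  (hp01 : forall n (e : edge n), 0 <= p n e <= 1)
  (hp : forall n (e : edge n),
      (C - alpha n) / n%:R <= p n e <= (C + alpha n) / n%:R) :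
  exists N : nat, (1 <= N)%N /\
    (forall n, (N <= n)%N -> C + alpha n < 1) /\
    (forall n, (N <= n)%N -> forall (i : 'I_n) (t : nat), (1 <= t <= n)%N ->
       Expect (p n) (fun w => (#|Nt w t i|)%:R) <= (C + alpha n) ^+ t /\
       Expect (p n) (fun w => ((#|Nt w t i|)%:R) ^+ 2)
         <= (C + alpha n) ^+ t / (1 - (C + alpha n))).
Proof.
have [N [N_ge1 Cu_lt1]] := eventually_addr_lt1 hC1 halpha.
exists N; split=> //; split=> // n le_Nn i t _.
have Cu_ge0 : 0 <= C + alpha n := addr_ge0 (ltW hC0) (halpha0 n).
have p_le e : 0 <= p n e <= (C + alpha n) / n%:R.
  by case/andP: (hp01 n e) => -> _; case/andP: (hp n e).
have Cu_lt1n := Cu_lt1 n le_Nn.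
split; first exact: (Expect_card_Nt_le p_le Cu_ge0 Cu_lt1n).
exact: (Expect_card_Nt_sqr_le p_le Cu_ge0 Cu_lt1n).
Qed.
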